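(* Let $n=2k+1$ for an integer $k\ge 2$, and let $\sigma_n$ be the multiset consisting of $k$ copies of $1$ and $k+1$ copies of $-k/(k+1)$. Then $\sum_{\lambda\in\sigma_n}\lambda=0$ (counted with multiplicity), and $\sigma_n$ is not realizable.
   Context: A multiset $\sigma=\{\lambda_1,\dots,\lambda_n\}$ of complex numbers is realizable if there exists an $n\times n$ matrix with all entries real and nonnegative whose eigenvalues, counted with algebraic multiplicity, are exactly $\lambda_1,\dots,\lambda_n$. *)

From HB Require Import structures.
From mathcomp Require Import all_boot all_order all_algebra.
From mathcomp Require Import complex.
From mathcomp Require Import reals.
Set Implicit Arguments. Unset Strict Implicit. Unset Printing Implicit Defensive.
Import Order.TTheory GRing.Theory Num.Theory.
Local Open Scope ring_scope.
Local Open Scope complex_scope.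

(* A multiset of complex numbers (a list, order irrelevant) of size n is
   realizable if there is an n x n matrix with real nonnegative entries whose
   eigenvalues, counted with algebraic multiplicity, are exactly the elements
   of the list, i.e. whose characteristic polynomial (over C) is
   \prod_(l <- s) (X - l). *)
Definition realizable (R : realType) (s : seq R[i]) : Prop :=
  exists A : 'M[R]_(size s),
    (forall i j, 0 <= A i j) /\
    char_poly (map_mx (fun x : R => x%:C) A) = \prod_(l <- s) ('X - l%:P).

Definition sigma (R : realType) (k : nat) : seq R[i] :=
  nseq k 1 ++ nseq k.+1 ((- (k%:R / k.+1%:R))%:C).

From mathcomp Require Import all_boot all_order all_algebra.
From mathcomp Require Import complex reals.
From mathcomp Require Import ring lra zify.
Import Order.TTheory GRing.Theory Num.Theory.
Set Implicit Arguments. Unset Strict Implicit. Unset Printing Implicit Defensive.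
Local Open Scope ring_scope.

(* If A >= 0 had spectrum sigma, then tr A = 0 forces a zero diagonal, and by
   Cayley-Hamilton (A - 1)^k (A + c)^(k+1) = 0 with c = k/(k+1).  Restricting A
   to a minimal nonempty index set closed under the support of A gives an
   irreducible block B with the same two properties.  F = (B + c)/(1 + c) is then
   nonnegative, irreducible with positive diagonal, hence primitive, and
   annihilated by (X - 1)^k X^(k+1).  By the Perron-Frobenius argument its
   eigenvalue 1 is simple: F^(k+1) is a positive rank-one idempotent and
   F - F^(k+1) is nilpotent, so tr F = 1.  But tr F = m k/(2k + 1) for the size m
   of B, and m k = 2k + 1 is impossible when k >= 2. *)

Lemma mxtrace_nilpotent (C : closedFieldType) n (N : 'M[C]_n.+1) j :
  N ^+ j = 0 -> \tr N = 0.
Proof.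
move=> Nj; have [r defN] := closed_field_poly_normal (char_poly N).
move: defN; rewrite (monicP (char_poly_monic N)) scale1r => defN.
have r0 z : z \in r -> z = 0.
  move=> zr; have : root (char_poly N) z by rewrite defN root_prod_XsubC.
  rewrite -eigenvalue_root_char => /eigenvalueP [v vN vn0].
  have vNX t : v *m N ^+ t = z ^+ t *: v.
    elim: t => [|t IH]; first by rewrite !expr0 mulmx1 scale1r.
    by rewrite exprSr -mulmxE mulmxA IH -scalemxAl vN scalerA -exprSr.
  have := vNX j; rewrite Nj mulmx0 => /esym/eqP.
  by rewrite scaler_eq0 (negPf vn0) orbF expf_eq0 => /andP[_ /eqP].
have charN : char_poly N = 'X^(size r).
  rewrite defN (eq_big_seq (fun _ => 'X)); last by move=> z /r0 ->; rewrite subr0.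
  by rewrite big_const_seq count_predT iter_mulr_1.
have sr : size r = n.+1.
  by have := size_char_poly N; rewrite charN size_polyXn => -[].
have := char_poly_trace N (ltn0Sn n).
rewrite charN sr coefXn eqn_leq ltnn andbF => /esym/eqP.
by rewrite oppr_eq0 => /eqP.
Qed.

Lemma exists_last_true (P : pred nat) k : P 0%N -> ~~ P k ->
  exists j, P j /\ ~~ P j.+1.
Proof.
move=> P0; elim: k => [|k IH] Pk; first by rewrite P0 in Pk.
by have [Pk'|/IH//] := boolP (P k); exists k.
Qed.

Lemma horner_mx_sum (R : comNzRingType) n (A : 'M[R]_n.+1) (p : {poly R}) :
  horner_mx A p = \sum_(j < size p) p`_j *: A ^+ j.
Proof.
rewrite -{1}[p]coefK poly_def rmorph_sum; apply: eq_bigr => j _.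
by rewrite -mul_polyC rmorphM /= horner_mx_C rmorphXn /= horner_mx_X -mulmxE mul_scalar_mx.
Qed.

Lemma horner_mx_exprn_annihilator (R : comNzRingType) n (F : 'M[R]_n.+1) k L :
  (0 < L)%N -> (F - 1) ^+ k * F ^+ k.+1 = 0 ->
  horner_mx (F ^+ L) (('X - 1) ^+ k * 'X ^+ k.+1) = 0.
Proof.
move=> L_gt0 annF; set q := ('X - 1) ^+ k * 'X ^+ k.+1.
have qF : horner_mx F q = 0.
  by rewrite rmorphM !rmorphXn rmorphB /= horner_mx_X rmorph1.
have -> : horner_mx (F ^+ L) q = horner_mx F (('X^L - 1) ^+ k * ('X^L) ^+ k.+1).
  by rewrite !rmorphM !rmorphXn !rmorphB /= !rmorph1 horner_mx_X rmorphXn /= horner_mx_X.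
have -> : ('X^L - 1) ^+ k * ('X^L) ^+ k.+1 =
    q * ((\sum_(i < L) 'X^i) ^+ k * 'X^(L.-1 * k.+1)) :> {poly R}.
  rewrite /q subrX1 exprMn -exprM.
  rewrite (_ : (L * k.+1 = k.+1 + L.-1 * k.+1)%N); last by case: L L_gt0.
  by rewrite exprD; ring.
by rewrite rmorphM /= qF mul0r.
Qed.

Section NonnegativeMatrices.
Variable R : realType.

Definition nneg_mx m n (M : 'M[R]_(m, n)) := forall i j, 0 <= M i j.

Definition irreducible_mx n (M : 'M[R]_n) :=
  forall T : {set 'I_n}, T != set0 ->
    (forall i j, i \in T -> 0 < M i j -> j \in T) -> T = setT.

Lemma nneg_mxM m n p (M : 'M[R]_(m, n)) (N : 'M[R]_(n, p)) :
  nneg_mx M -> nneg_mx N -> nneg_mx (M *m N).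
Proof. by move=> M0 N0 i j; rewrite mxE sumr_ge0 // => l _; rewrite mulr_ge0. Qed.

Lemma mulmx_ge_term m n p (M : 'M[R]_(m, n)) (N : 'M[R]_(n, p)) i l j :
  nneg_mx M -> nneg_mx N -> M i l * N l j <= (M *m N) i j.
Proof.
move=> M0 N0; rewrite mxE (bigD1 l) //= lerDl sumr_ge0 // => l' _.
by rewrite mulr_ge0.
Qed.

Lemma nneg_mxX n (M : 'M[R]_n) t : nneg_mx M -> nneg_mx (M ^+ t).
Proof.
move=> M0; elim: t => [|t IH]; first by move=> i j; rewrite expr0 mxE ler0n.
by rewrite exprS -mulmxE; apply: nneg_mxM.
Qed.

Lemma ler_mulmx_col m n (M : 'M[R]_(m, n)) (a b : 'cV[R]_n) :
  nneg_mx M -> (forall i, a i 0 <= b i 0) -> forall i, (M *m a) i 0 <= (M *m b) i 0.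
Proof.
move=> M0 ab i; have ba0 : nneg_mx (b - a) by move=> l z; rewrite (ord1 z) !mxE subr_ge0.
by have := nneg_mxM M0 ba0 i 0; rewrite mulmxBr !mxE subr_ge0.
Qed.

Lemma exprn_diag_gt0 n (M : 'M[R]_n) t i :
  nneg_mx M -> 0 < M i i -> 0 < (M ^+ t) i i.
Proof.
move=> M0 Mii; elim: t => [|t IH]; first by rewrite expr0 mxE eqxx ltr01.
rewrite exprSr -mulmxE; apply: lt_le_trans (mulmx_ge_term i i i (nneg_mxX t M0) M0).
exact: mulr_gt0.
Qed.

Lemma exprn_mulmx_ge n (M : 'M[R]_n) (x : 'cV[R]_n) mu t :
  nneg_mx M -> 0 <= mu -> (forall i, mu * x i 0 <= (M *m x) i 0) ->
  forall i, mu ^+ t * x i 0 <= (M ^+ t *m x) i 0.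
Proof.
move=> M0 mu0 Mx; elim: t => [|t IH] i; first by rewrite !expr0 mul1r mul1mx.
rewrite [M ^+ _]exprSr -mulmxE -mulmxA.
have Mx' j : (mu *: x) j 0 <= (M *m x) j 0 by rewrite mxE Mx.
apply: le_trans (ler_mulmx_col (nneg_mxX t M0) Mx' i).
by rewrite -scalemxAr mxE exprSr -mulrA mulrCA ler_wpM2l.
Qed.

Lemma bernoulli_ler (e : R) L : 0 <= e -> 1 + L%:R * e <= (1 + e) ^+ L.
Proof.
move=> e0; elim: L => [|L IH]; first by rewrite mul0r addr0 expr0.
rewrite exprS; apply: le_trans (_ : (1 + e) * (1 + L%:R * e) <= _); last first.
  by rewrite ler_wpM2l // addr_ge0.
have : 0 <= L%:R * e * e by rewrite !mulr_ge0.
rewrite -natr1 mulrDl mul1r; nra.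
Qed.

Lemma monic_recurrence_growth (p : {poly R}) (s : nat -> R) mu :
  p \is monic -> 0 < s 0%N -> (forall j, mu * s j <= s j.+1) ->
  \sum_(j < size p) p`_j * s j = 0 ->
  mu <= \sum_(j < (size p).-1) `|p`_j| + 1.
Proof.
move=> p_monic s0 s_mu s_rec; set d := (size p).-1; set C := \sum_(j < d) _.
have C0 : 0 <= C by rewrite sumr_ge0.
have [mu_le1|mu_gt1] := lerP mu 1; first lra.
have s_gt0 j : 0 < s j.
  by elim: j => // j IH; apply: lt_le_trans (s_mu j); rewrite mulr_gt0 //; lra.
have s_incr a b : (a <= b)%N -> s a <= s b.
  move=> /subnK <-; elim: (b - a)%N => [|c IH] //=; rewrite addSn.
  by apply: le_trans IH (le_trans _ (s_mu _)); rewrite ler_peMl //; [exact: ltW|lra].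
have size_p : size p = d.+1 by rewrite prednK // lt0n size_poly_eq0 monic_neq0.
have lead_p : p`_d = 1 by move/monicP: p_monic; rewrite lead_coefE.
move: s_rec; rewrite size_p big_ord_recr /= lead_p mul1r => s_rec.
have sd_le : s d <= \sum_(j < d) `|p`_j| * s j.
  rewrite (_ : s d = - \sum_(j < d) p`_j * s j); last first.
    by apply/eqP; rewrite -addr_eq0 addrC s_rec.
  rewrite -sumrN; apply: ler_sum => j _; apply: le_trans (ler_norm _) _.
  by rewrite normrN normrM (gtr0_norm (s_gt0 _)).
have : mu * s d <= C * s d.
  apply: le_trans (_ : mu * \sum_(j < d) `|p`_j| * s j <= _).
    by rewrite ler_wpM2l //; lra.
  rewrite mulr_sumr mulr_suml; apply: ler_sum => j _.
  by rewrite mulrCA ler_wpM2l // (le_trans (s_mu j)) // s_incr.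
by rewrite ler_pM2r //; lra.
Qed.

Lemma nneg_mx_growth_bound n (K : 'M[R]_n.+1) (x : 'cV[R]_n.+1) (p : {poly R}) mu :
  p \is monic -> horner_mx K p = 0 -> nneg_mx K -> nneg_mx x ->
  0 < \sum_i x i 0 -> (forall i, mu * x i 0 <= (K *m x) i 0) ->
  mu <= \sum_(j < (size p).-1) `|p`_j| + 1.
Proof.
move=> p_monic pK K0 x0 sum_x Kx.
apply: (monic_recurrence_growth (s := fun j => \sum_i (K ^+ j *m x) i 0)) => //.
- by rewrite (eq_bigr (fun i => x i 0)) // => i _; rewrite expr0 mul1mx.
- move=> j; rewrite mulr_sumr; apply: ler_sum => i _.
  have Kx' l : (mu *: x) l 0 <= (K *m x) l 0 by rewrite mxE.
  have := ler_mulmx_col (nneg_mxX j K0) Kx' i.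
  by rewrite -scalemxAr mxE exprSr -mulmxE -mulmxA.
transitivity (\sum_i (horner_mx K p *m x) i 0); last first.
  by rewrite pK mul0mx; apply: big1 => i _; rewrite mxE.
rewrite horner_mx_sum mulmx_suml (eq_bigr (fun i =>
  \sum_(j < size p) p`_j * (K ^+ j *m x) i 0)); last first.
  by move=> i _; rewrite summxE; apply: eq_bigr => j _; rewrite -scalemxAl mxE.
by rewrite exchange_big /=; apply: eq_bigr => j _; rewrite mulr_sumr.
Qed.

Lemma pos_fixed_vector_unique n (M : 'M[R]_n.+1) (v w : 'cV[R]_n.+1) :
  (forall i j, 0 < M i j) -> (forall i, 0 < w i 0) -> M *m w = w -> M *m v = v ->
  exists t, v = t *: w.
Proof.
move=> M_gt0 w_gt0 Mw Mv; pose f i := v i 0 / w i 0.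
have [i0 _ f_min] := @arg_minP _ _ _ (ord0 : 'I_n.+1) xpredT f isT.
exists (f i0); pose x := v - f i0 *: w.
have x0 i : 0 <= x i 0 by rewrite !mxE subr_ge0 -ler_pdivlMr // f_min.
have xi0 : x i0 0 = 0 by rewrite !mxE /f divfK ?subrr // gt_eqF.
have Mx : M *m x = x by rewrite mulmxBr -scalemxAr Mw Mv.
(* the fixed vector x >= 0 vanishes at i0, and M > 0 spreads that zero everywhere *)
have Mx_i0 : \sum_l M i0 l * x l 0 = 0 by rewrite -[RHS]xi0 -[in RHS]Mx mxE.
apply/matrixP => i j; rewrite (ord1 j); apply/eqP; rewrite -subr_eq0.
have := psumr_eq0P (fun l _ => mulr_ge0 (ltW (M_gt0 i0 l)) (x0 l)) Mx_i0 (i := i) isT.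
by move/eqP; rewrite mulf_eq0 gt_eqF //= !mxE.
Qed.

Lemma irreducible_primitive n (F : 'M[R]_n.+1) :
  nneg_mx F -> (forall i, 0 < F i i) -> irreducible_mx F ->
  forall i j, 0 < (F ^+ n.+1) i j.
Proof.
move=> F0 Fii F_irr i.
pose reach t := [set j | 0 < (F ^+ t) i j].
have reach_i t : i \in reach t by rewrite inE exprn_diag_gt0.
have reachS t a b : 0 < (F ^+ t) i a -> 0 < F a b -> 0 < (F ^+ t.+1) i b.
  move=> Fta Fab; rewrite exprSr -mulmxE.
  by apply: lt_le_trans (mulmx_ge_term i a b (nneg_mxX t F0) F0); rewrite mulr_gt0.
have reach_sub t : reach t \subset reach t.+1.
  by apply/subsetP => j; rewrite !inE => Ftj; apply: reachS Ftj (Fii j).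
(* the set reached in t steps grows strictly until it is closed, hence until it is everything *)
have card_reach t : (minn t.+1 n.+1 <= #|reach t|)%N.
  elim: t => [|t IH]; first by apply: leq_trans (geq_minl _ _) _; rewrite card_gt0; apply/set0Pn; exists i.
  have [full|] := eqVneq (reach t) setT.
    have := subset_leq_card (reach_sub t); rewrite full cardsT card_ord => h.
    exact: leq_trans (geq_minr _ _) h.
  have [/existsP[a /existsP[b /and3P[ha hab hb]]] _|open not_full] :=
    boolP [exists a, exists b, [&& a \in reach t, 0 < F a b & b \notin reach t]].
    have : reach t \proper reach t.+1.
      rewrite properE reach_sub; apply/subsetPn; exists b => //.
      by move: ha; rewrite !inE => ha; apply: reachS ha hab.
    by move/proper_card; lia.
  case/eqP: not_full; apply: F_irr; first by apply/set0Pn; exists i.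
  move=> a b ha hab; apply/negPn/negP => hb.
  by move/existsPn: open => /(_ a)/existsPn/(_ b); rewrite ha hab hb.
have : reach n.+1 == setT.
  by rewrite eqEcard subsetT cardsT card_ord; have := card_reach n.+1; lia.
by move/eqP=> full j; have := in_setT j; rewrite -full inE.
Qed.

Lemma pos_mx_fixed_vector_gt0 n (G : 'M[R]_n) (y : 'cV[R]_n) a :
  (forall i j, 0 < G i j) -> G *m y = y -> nneg_mx y -> 0 < y a 0 ->
  forall i, 0 < y i 0.
Proof.
move=> G_gt0 Gy y0 ya i; rewrite -Gy.
apply: lt_le_trans (mulmx_ge_term i a 0 (fun i j => ltW (G_gt0 i j)) y0).
by rewrite mulr_gt0.
Qed.

Lemma fixed_vector_mixed_sign_expands n (G : 'M[R]_n) (y : 'cV[R]_n) i1 i2 :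
  (forall i j, 0 < G i j) -> G *m y = y -> 0 < y i1 0 -> y i2 0 < 0 ->
  exists x : 'cV[R]_n, exists2 e, 0 < e &
    [/\ nneg_mx x, 0 < \sum_i x i 0 & forall i, (1 + e) * x i 0 <= (G *m x) i 0].
Proof.
move=> G_gt0 Gy y1 y2; have G0 : nneg_mx G by move=> i j; apply: ltW.
pose x := \col_i Num.max (y i 0) 0; pose w := \col_i Num.max (- y i 0) 0.
have x0 : nneg_mx x by move=> i j; rewrite !mxE le_max lexx orbT.
have w0 : nneg_mx w by move=> i j; rewrite !mxE le_max lexx orbT.
have y_xw : y = x - w.
  apply/matrixP => i j; rewrite (ord1 j) !mxE.
  have [y_ge0|y_lt0] := lerP 0 (y i 0); first by rewrite max_r ?subr0 // oppr_le0.
  by rewrite max_l ?sub0r ?opprK // oppr_ge0 ltW.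
have Gx_Gw i : (G *m x) i 0 - x i 0 = (G *m w) i 0 - w i 0.
  have : G *m x - G *m w = x - w by rewrite -mulmxBr -y_xw.
  set Gx := G *m x; set Gw := G *m w.
  by move/(congr1 (fun M : 'cV[R]_n => M i 0)); rewrite !mxE; lra.
(* G > 0 sees both the positive and the negative part of y at every index *)
pose z i := (G *m x) i 0 - x i 0.
have z_gt0 i : 0 < z i.
  have [y_ge0|y_lt0] := lerP 0 (y i 0).
    rewrite /z Gx_Gw (_ : w i 0 = 0) ?subr0; last by rewrite mxE max_r // oppr_le0.
    apply: lt_le_trans (mulmx_ge_term i i2 0 G0 w0); rewrite mulr_gt0 // mxE.
    by rewrite max_l ?oppr_gt0 // ltW // oppr_gt0.
  rewrite /z (_ : x i 0 = 0) ?subr0; last by rewrite mxE max_r // ltW.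
  apply: lt_le_trans (mulmx_ge_term i i1 0 G0 x0); rewrite mulr_gt0 // mxE.
  by rewrite max_l // ltW.
have [i0 _ z_min] := @arg_minP _ _ _ i1 xpredT z isT.
pose X := \sum_i x i 0.
have x_le i : x i 0 <= X by rewrite /X (bigD1 i) //= lerDl sumr_ge0 // => l _.
have X_gt0 : 0 < X by apply: lt_le_trans (x_le i1); rewrite mxE max_l // ltW.
set e := z i0 / X; exists x, e; first by rewrite divr_gt0.
split=> // i.
have : e * x i 0 <= z i0 by rewrite mulrAC ler_pdivrMr // ler_wpM2l // ltW.
have := z_min i isT; rewrite /z; lra.
Qed.

Lemma annihilated_powers_not_expanding n (G : 'M[R]_n.+1) (q : {poly R})
    (x : 'cV[R]_n.+1) e :
  q \is monic -> (forall L, (0 < L)%N -> horner_mx (G ^+ L) q = 0) ->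
  nneg_mx G -> nneg_mx x -> 0 < \sum_i x i 0 -> 0 < e ->
  ~ (forall i, (1 + e) * x i 0 <= (G *m x) i 0).
Proof.
move=> q_monic qG G0 x0 sum_x e_gt0 Gx.
set C := \sum_(j < (size q).-1) `|q`_j|.
have C0 : 0 <= C by rewrite sumr_ge0.
pose L := (Num.bound (C / e)).+1.
have growth : C + 1 < (1 + e) ^+ L.
  apply: lt_le_trans (bernoulli_ler L (ltW e_gt0)).
  have : C / e < (Num.bound (C / e))%:R by rewrite archi_boundP // divr_ge0 // ltW.
  by rewrite ltr_pdivrMr // /L -natr1 mulrDl mul1r; lra.
have := nneg_mx_growth_bound q_monic (qG L erefl) (nneg_mxX L G0) x0 sum_x
  (exprn_mulmx_ge L G0 (addr_ge0 ler01 (ltW e_gt0)) Gx).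
by rewrite -/C; lra.
Qed.

Lemma primitive_pos_fixed_vector n (F : 'M[R]_n.+1) (q : {poly R}) (y : 'cV[R]_n.+1) :
  nneg_mx F -> (forall i j, 0 < (F ^+ n.+1) i j) -> q \is monic ->
  (forall L, (0 < L)%N -> horner_mx (F ^+ L) q = 0) ->
  y != 0 -> F *m y = y ->
  exists2 u : 'cV[R]_n.+1, forall i, 0 < u i 0 & F *m u = u.
Proof.
move=> F0 G_gt0 q_monic qF.
have FXy t (v : 'cV[R]_n.+1) : F *m v = v -> F ^+ t *m v = v.
  move=> Fv; elim: t => [|t IH]; first by rewrite expr0 mul1mx.
  by rewrite exprSr -mulmxE -mulmxA Fv.
wlog [a ya] : y / exists a, 0 < y a 0.
  move=> wlog_pos yn0 Fy; have /matrix0Pn[a [b ya]] := yn0; rewrite (ord1 b) in ya.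
  have [ya_gt0|ya_lt0] := ltrP 0 (y a 0); first by apply: (wlog_pos y) => //; exists a.
  apply: (wlog_pos (- y)); rewrite ?oppr_eq0 ?mulmxN ?Fy //.
  by exists a; rewrite mxE oppr_gt0 lt_neqAle ya.
move=> _ Fy; have Gy := FXy n.+1 y Fy.
case: (boolP [exists i, y i 0 < 0]) => [/existsP[i2 y2]|/existsPn y0].
  have [x [e e_gt0 [x0 sum_x Gx]]] := fixed_vector_mixed_sign_expands G_gt0 Gy ya y2.
  have qG L : (0 < L)%N -> horner_mx ((F ^+ n.+1) ^+ L) q = 0.
    by move=> L_gt0; rewrite -exprM qF // muln_gt0.
  by have := annihilated_powers_not_expanding q_monic qG (nneg_mxX _ F0) x0 sum_x e_gt0 Gx.
exists y => //; apply: pos_mx_fixed_vector_gt0 G_gt0 Gy _ ya.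
by move=> i j; rewrite (ord1 j) leNgt y0.
Qed.

Lemma pos_fixed_vector_no_jordan n (F Z W : 'M[R]_n) (u : 'cV[R]_n) :
  nneg_mx F -> (forall i, 0 < u i 0) -> F *m u = u ->
  Z *m F = Z + W -> W *m F = W -> W = 0.
Proof.
move=> F0 u_gt0 Fu ZF WF; apply/eqP/negPn/negP => /matrix0Pn[a [b Wab]].
have ZFX t : Z *m F ^+ t = Z + t%:R *: W.
  elim: t => [|t IH]; first by rewrite expr0 mulmx1 scale0r addr0.
  rewrite exprSr -mulmxE mulmxA IH mulmxDl -scalemxAl ZF WF.
  by rewrite -natr1 scalerDl scale1r addrA addrAC.
(* u bounds the powers of F, so Z F^t stays bounded while t W does not *)
have FX_le t l : (F ^+ t) l b <= u l 0 / u b 0.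
  rewrite ler_pdivlMr //; have FXu : F ^+ t *m u = u.
    by elim: t => [|t IH]; rewrite ?expr0 ?mul1mx // exprSr -mulmxE -mulmxA Fu.
  have u0 : nneg_mx u by move=> i j; rewrite (ord1 j) ltW.
  by rewrite -{2}FXu (mulmx_ge_term l b 0 (nneg_mxX t F0) u0).
pose B := \sum_l `|Z a l| * (u l 0 / u b 0).
have bounded t : `|Z a b + t%:R * W a b| <= B.
  have -> : Z a b + t%:R * W a b = (Z *m F ^+ t) a b by rewrite ZFX !mxE.
  rewrite mxE; apply: le_trans (ler_norm_sum _ _ _) _; apply: ler_sum => l _.
  by rewrite normrM (ger0_norm (nneg_mxX t F0 l b)) ler_wpM2l.
have W_gt0 : 0 < `|W a b| by rewrite normr_gt0.
pose t := Num.bound ((B + `|Z a b|) / `|W a b|).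
have : (B + `|Z a b|) / `|W a b| < t%:R.
  by rewrite archi_boundP // divr_ge0 // addr_ge0 // (le_trans _ (bounded 0%N)).
rewrite ltr_pdivrMr // => t_big.
have : `|t%:R * W a b| <= `|Z a b + t%:R * W a b| + `|Z a b|.
  by apply: le_trans (ler_normB _ _); rewrite addrAC subrr add0r.
by rewrite normrM ger0_norm //; have := bounded t; lra.
Qed.

Lemma primitive_annihilated_power_fixed n (F : 'M[R]_n.+1) k :
  nneg_mx F -> (forall i, 0 < F i i) -> (forall i j, 0 < (F ^+ n.+1) i j) ->
  (F - 1) ^+ k * F ^+ k.+1 = 0 -> F ^+ k.+1 * F = F ^+ k.+1.
Proof.
move=> F0 Fii G_gt0 annF.
pose Y j := F ^+ k.+1 * (F - 1) ^+ j.
have F_F1 : GRing.comm F (F - 1) by apply: commrB; [exact: commr_refl|exact: commr1].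
have FY j : F * Y j = Y j * F.
  by rewrite /Y mulrA -exprS -mulrA -(commrX j F_F1) mulrA -exprSr.
have YS j : Y j.+1 = Y j * F - Y j by rewrite /Y [(F - 1) ^+ _]exprSr mulrA mulrBr mulr1.
have Y0 : Y 0%N != 0.
  by apply/matrix0Pn; exists 0, 0; rewrite /Y expr0 mulr1 gt_eqF ?exprn_diag_gt0.
have Yk : ~~ (Y k != 0).
  by rewrite negbK /Y (commrX k (commr_sym (commrX k.+1 (commr_sym F_F1)))) annF.
have [j [Yj Yj1]] := exists_last_true (P := fun j => Y j != 0) Y0 Yk.
move/negPn/eqP: Yj1 => Yj1.
have YjF : Y j * F = Y j by apply/eqP; rewrite -subr_eq0 -YS Yj1.
have /matrix0Pn[a [b Yab]] := Yj.
have [u u_gt0 Fu] : exists2 u : 'cV[R]_n.+1, forall i, 0 < u i 0 & F *m u = u.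
  apply: (primitive_pos_fixed_vector (y := col b (Y j)) F0 G_gt0 _
    (fun L L_gt0 => horner_mx_exprn_annihilator L_gt0 annF)).
  - by rewrite monicMr ?monicXn // monic_exp // -polyC1 monicXsubC.
  - by apply/matrix0Pn; exists a, 0; rewrite mxE.
  - by rewrite !colE mulmxA; congr (_ *m _); rewrite mulmxE FY YjF.
case: j => [|j] in Yj Yj1 YjF Yab *.
  by move: Yj1; rewrite YS /Y expr0 mulr1 => /eqP; rewrite subr_eq0 => /eqP.
suff Yj0 : Y j.+1 = 0 by rewrite Yj0 eqxx in Yj.
apply: (pos_fixed_vector_no_jordan (Z := Y j) F0 u_gt0 Fu); rewrite mulmxE //.
by rewrite YS addrC subrK.
Qed.

Lemma pos_idempotent_mxtrace n (E : 'M[R]_n.+1) :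
  (forall i j, 0 < E i j) -> E * E = E -> \tr E = 1.
Proof.
move=> E_gt0 EE.
have Ecol j : E *m col j E = col j E by rewrite !colE mulmxA mulmxE EE.
(* the columns of E are proportional, so E has rank one *)
have E_rank1 l j : E l j * E 0 0 = E 0 j * E l 0.
  have col0_gt0 i : 0 < col 0 E i 0 by rewrite mxE.
  have [t /matrixP colj] := pos_fixed_vector_unique E_gt0 col0_gt0 (Ecol 0) (Ecol j).
  by have := colj l 0; have := colj 0 0; rewrite !mxE => -> ->; rewrite mulrAC.
apply: (mulfI (lt0r_neq0 (E_gt0 0 0))); rewrite mulr1 -[in RHS]EE -mulmxE mxE.
by rewrite mulr_sumr; apply: eq_bigr => j _; rewrite mulrC E_rank1.
Qed.

Lemma mxtrace_nilpotent_real n (N : 'M[R]_n.+1) j : N ^+ j = 0 -> \tr N = 0.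
Proof.
move=> Nj; apply/eqP; rewrite -(fmorph_eq0 (real_complex R)) -trace_map_mx.
by apply/eqP/(mxtrace_nilpotent (j := j)); rewrite -rmorphXn Nj rmorph0.
Qed.

Lemma irreducible_annihilated_mxtrace n (F : 'M[R]_n.+1) k :
  nneg_mx F -> (forall i, 0 < F i i) -> irreducible_mx F ->
  (F - 1) ^+ k * F ^+ k.+1 = 0 -> \tr F = 1.
Proof.
move=> F0 Fii F_irr annF.
have G_gt0 := irreducible_primitive F0 Fii F_irr.
have EF := primitive_annihilated_power_fixed F0 Fii G_gt0 annF.
set E := F ^+ k.+1 in EF *.
have EFX t : E * F ^+ t = E.
  by elim: t => [|t IH]; rewrite ?expr0 ?mulr1 // exprSr mulrA IH.
have FE : F * E = E by rewrite /E -exprS exprSr.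
have E_gt0 i j : 0 < E i j.
  rewrite -(EFX n.+1) -mulmxE.
  apply: lt_le_trans (mulmx_ge_term i i j (nneg_mxX _ F0) (nneg_mxX _ F0)).
  by rewrite mulr_gt0 ?exprn_diag_gt0.
(* F = E + (F - E) with E the rank-one Perron projection and F - E nilpotent *)
have FE_nil : (F - E) ^+ k.+1 = 0.
  suff -> t : (F - E) ^+ t.+1 = F ^+ t.+1 - E by rewrite subrr.
  elim: t => [|t IH]; first by rewrite !expr1.
  by rewrite exprS IH mulrBl !mulrBr -exprS FE EFX (EFX k.+1) subrr subr0.
rewrite -[F](subrK E) mxtraceD (mxtrace_nilpotent_real FE_nil) add0r.
exact: pos_idempotent_mxtrace E_gt0 (EFX k.+1).
Qed.

Lemma irreducible_zero_diag_not_annihilated n k (B : 'M[R]_n.+1) :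
  (2 <= k)%N -> nneg_mx B -> (forall i, B i i = 0) -> irreducible_mx B ->
  (B - 1) ^+ k * (B + (k%:R / k.+1%:R)%:M) ^+ k.+1 != 0.
Proof.
move=> k_ge2 B0 Bii B_irr; set c := k%:R / k.+1%:R.
have c_gt0 : 0 < c by rewrite divr_gt0 // ltr0n; lia.
set r := 1 + c; have r_gt0 : 0 < r by rewrite addr_gt0.
pose F := r^-1 *: (B + c%:M).
have rF : r *: F = B + c%:M by rewrite /F scalerA mulfV ?gt_eqF // scale1r.
have rF1 : r *: (F - 1) = B - 1.
  rewrite scalerBr rF -scalemx1; apply/matrixP => i j; rewrite !mxE.
  by case: (i == j); rewrite /= ?mulr1n ?mulr0n /r; ring.
have Fii i : F i i = r^-1 * c by rewrite !mxE Bii eqxx mulr1n add0r.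
have F0 : nneg_mx F.
  move=> i j; rewrite !mxE; apply: mulr_ge0; first by rewrite invr_ge0 ltW.
  by rewrite addr_ge0 // mulrn_wge0 // ltW.
have F_irr : irreducible_mx F.
  move=> T Tn0 T_closed; apply: B_irr => // i j iT Bij.
  have [<-//|ij] := eqVneq i j; apply: T_closed iT _.
  by rewrite !mxE (negPf ij) mulr0n addr0 mulr_gt0 // invr_gt0.
apply/negP => /eqP annB.
have annF : (F - 1) ^+ k * F ^+ k.+1 = 0.
  move: annB; rewrite -rF -rF1 !exprZn -scalerAl -scalerAr scalerA => /eqP.
  by rewrite scaler_eq0 mulf_eq0 !expf_eq0 (gt_eqF r_gt0) !andbF => /eqP.
have Fii_gt0 i : 0 < F i i by rewrite Fii mulr_gt0 // invr_gt0.
have := irreducible_annihilated_mxtrace F0 Fii_gt0 F_irr annF.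
rewrite /mxtrace (eq_bigr (fun _ => r^-1 * c)) // sumr_const card_ord => trF.
have : (k * n.+1)%:R = (2 * k + 1)%:R :> R.
  rewrite -[RHS]mul1r -trF /r /c -mulr_natr !natrM; field.
  have k0 : 0 <= k%:R :> R := ler0n _ _.
  by apply/andP; split; apply: lt0r_neq0; lra.
move/eqP; rewrite eqr_nat => /eqP; move: k_ge2; clear.
by case: n => [|[|n]]; [lia|lia|nia].
Qed.

Definition restrmx n (S : {set 'I_n}) (M : 'M[R]_n) : 'M[R]_#|S| :=
  \matrix_(i, j) M (enum_val i) (enum_val j).

Definition support_closed n (S : {set 'I_n}) (M : 'M[R]_n) :=
  forall i j, i \in S -> j \notin S -> M i j = 0.

Lemma support_closedM n (S : {set 'I_n}) (M N : 'M[R]_n) :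
  support_closed S M -> support_closed S N -> support_closed S (M * N).
Proof.
move=> SM SN i j iS jS; rewrite -mulmxE mxE big1 // => l _.
by have [lS|lS] := boolP (l \in S); [rewrite SN // mulr0 | rewrite SM // mul0r].
Qed.

Lemma support_closedD_scalar n (S : {set 'I_n}) (M : 'M[R]_n) a :
  support_closed S M -> support_closed S (M + a%:M).
Proof.
move=> SM i j iS jS; rewrite !mxE SM // add0r; case: eqP => [ij|]; last by rewrite mulr0n.
by move: jS; rewrite -ij iS.
Qed.

Lemma restrmxM n (S : {set 'I_n}) (M N : 'M[R]_n) :
  support_closed S M -> restrmx S (M * N) = restrmx S M * restrmx S N.
Proof.
move=> SM; apply/matrixP => i j; rewrite -!mulmxE !mxE.
rewrite (bigID (mem S)) /= [X in _ + X]big1 ?addr0; last first.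
  by move=> l /= lS; rewrite SM ?enum_valP // mul0r.
by rewrite (big_enum_val (A := mem S)) /=; apply: eq_bigr => l _; rewrite !mxE.
Qed.

Lemma support_closedX n (S : {set 'I_n}) (M : 'M[R]_n) t :
  support_closed S M -> support_closed S (M ^+ t).
Proof.
move=> SM; elim: t => [|t IH]; last by rewrite exprS; apply: support_closedM.
by rewrite expr0 -[1]add0r; apply: support_closedD_scalar => i j; rewrite mxE.
Qed.

Lemma restrmxX n (S : {set 'I_n}) (M : 'M[R]_n) t :
  support_closed S M -> restrmx S (M ^+ t) = restrmx S M ^+ t.
Proof.
move=> SM; elim: t => [|t IH]; last by rewrite !exprS restrmxM // IH.
by apply/matrixP => i j; rewrite !expr0 !mxE (inj_eq enum_val_inj).
Qed.

Lemma restrmxD_scalar n (S : {set 'I_n}) (M : 'M[R]_n) a :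
  restrmx S (M + a%:M) = restrmx S M + a%:M.
Proof. by apply/matrixP => i j; rewrite !mxE (inj_eq enum_val_inj). Qed.

Lemma exists_irreducible_restriction n (A : 'M[R]_n.+1) : nneg_mx A ->
  exists S : {set 'I_n.+1},
    [/\ S != set0, support_closed S A & irreducible_mx (restrmx S A)].
Proof.
move=> A0.
pose closedb (T : {set 'I_n.+1}) :=
  [forall i in T, forall j, (A i j != 0) ==> (j \in T)].
pose ok_set T := (T != set0) && closedb T.
have setT_ok : ok_set [set: 'I_n.+1].
  apply/andP; split; first by apply/set0Pn; exists ord0; rewrite inE.
  by apply/forall_inP => i _; apply/forallP => j; rewrite inE implybT.
have [S /andP[Sn0 S_closed] S_min] :=
  @arg_minnP _ _ ok_set (fun T => #|T|) setT_ok.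
have SA i j : i \in S -> A i j != 0 -> j \in S.
  by move=> iS; move/forall_inP: S_closed => /(_ i iS)/forallP/(_ j)/implyP.
exists S; split => //.
  by move=> i j iS; apply: contraNeq; apply: SA.
move=> T Tn0 T_closed; pose T' := [set enum_val i | i in T].
have /S_min : ok_set T'.
  apply/andP; split.
    by case/set0Pn: Tn0 => i iT; apply/set0Pn; exists (enum_val i); rewrite imset_f.
  apply/forall_inP => _ /imsetP[i iT ->]; apply/forallP => j; apply/implyP => Aij.
  have ej := enum_rankK_in (enum_valP i) (SA _ _ (enum_valP i) Aij).
  rewrite -ej imset_f //; apply: T_closed iT _.
  by rewrite mxE ej lt_neqAle eq_sym Aij A0.
rewrite card_imset; last exact: enum_val_inj.
by move=> T_ge; apply/eqP; rewrite eqEcard subsetT cardsT card_ord.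
Qed.

Lemma nneg_mx_trace0_not_annihilated n k (A : 'M[R]_n.+1) :
  (2 <= k)%N -> nneg_mx A -> \tr A = 0 ->
  (A - 1) ^+ k * (A + (k%:R / k.+1%:R)%:M) ^+ k.+1 != 0.
Proof.
move=> k_ge2 A0 trA; apply/negP => /eqP annA.
have Aii i : A i i = 0 := psumr_eq0P (fun i _ => A0 i i) trA (i := i) isT.
have [S [Sn0 SA B_irr]] := exists_irreducible_restriction A0.
set B := restrmx S A in B_irr.
have B0 : nneg_mx B by move=> i j; rewrite mxE.
have Bii i : B i i = 0 by rewrite mxE Aii.
have annB : (B - 1) ^+ k * (B + (k%:R / k.+1%:R)%:M) ^+ k.+1 = 0.
  have A1 : A - 1 = A + (-1)%:M by rewrite raddfN.
  have SA1 := support_closedD_scalar (-1) SA.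
  have SAc := support_closedD_scalar (k%:R / k.+1%:R) SA.
  have := congr1 (restrmx S) annA.
  rewrite A1 restrmxM; last exact: support_closedX.
  rewrite !restrmxX // !restrmxD_scalar raddfN => ->.
  by apply/matrixP => i j; rewrite !mxE.
clearbody B; move: B B0 Bii B_irr annB; rewrite -card_gt0 in Sn0.
case: #|S| Sn0 => // m _ B B0 Bii B_irr /eqP.
by apply/negP; apply: irreducible_zero_diag_not_annihilated.
Qed.

End NonnegativeMatrices.

Unset Implicit Arguments.

Theorem theorem2 (R : realType) (k : nat) (hk : (2 <= k)%N) :
  size (sigma R k) = (2 * k + 1)%N /\
  \sum_(l <- sigma R k) l = 0 /\
  ~ realizable (sigma R k).
Proof.
set c := (k%:R / k.+1%:R : R).
pose sR := nseq k (1 : R) ++ nseq k.+1 (- c).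
have sigma_real : sigma R k = map (real_complex R) sR.
  by rewrite /sigma /sR map_cat !map_nseq rmorph1.
have size_sR : size sR = (2 * k).+1 by rewrite size_cat !size_nseq; lia.
have sum_sR : \sum_(l <- sR) l = 0.
  rewrite big_cat !big_nseq !iter_addr_0 mulNrn /c -[_ / _ *+ _]mulr_natr.
  by rewrite divfK ?pnatr_eq0 //= subrr.
split; first by rewrite sigma_real size_map size_sR addn1.
split; first by rewrite sigma_real big_map -rmorph_sum sum_sR rmorph0.
move=> [A [A0 charA]]; move: A A0 charA.
rewrite sigma_real size_map size_sR => A A0 charA.
have {}charA : char_poly A = \prod_(l <- sR) ('X - l%:P).
  apply: (@map_poly_inj _ _ (real_complex R)).
  by rewrite map_char_poly charA prod_map_poly.
have trA : \tr A = 0.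
  have := char_poly_trace A (ltn0Sn _).
  rewrite charA -[in X in _`_X]size_sR coefPn_prod_XsubC ?size_sR // sum_sR oppr0 => /esym/eqP.
  by rewrite oppr_eq0 => /eqP.
have := Cayley_Hamilton A; rewrite charA big_cat !big_nseq !iter_mulr_1.
rewrite rmorphM !rmorphXn !rmorphB /= horner_mx_X !horner_mx_C raddfN opprK => annA.
by move/eqP: annA; apply/negP; apply: nneg_mx_trace0_not_annihilated.
Qed.
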